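(* Let $p$ be an odd prime, $c\in\mathbb Z_p$ with $c(c^2+1)\not\equiv0\pmod p$. Then $$\Big(\sum_{k=0}^{[p/4]}\binom{4k}{2k}\Big(\frac{c^2}{16(c^2+1)}\Big)^k\Big)\Big(\sum_{k=0}^{[p/4]}\binom{4k}{2k}\frac1{(16(c^2+1))^k}\Big)\equiv\Big(\frac{2(c^2+1)}{p}\Big)\pmod p.$$
   Context: $[x]$ is the greatest integer $\le x$; $\mathbb Z_p$ is the set of rational numbers whose denominator is not divisible by $p$; $(\frac{\cdot}{p})$ is the Legendre symbol. *)

From HB Require Import structures.
From mathcomp Require Import all_boot all_order all_algebra.
Set Implicit Arguments. Unset Strict Implicit. Unset Printing Implicit Defensive.
Import Order.TTheory GRing.Theory Num.Theory.
Local Open Scope ring_scope.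

(* x is in Z_p : rational whose (reduced) denominator is not divisible by p *)
Definition pint (p : nat) (x : rat) : bool := ~~ (p %| `|denq x|)%N.

Definition congr_p (p : nat) (x y : rat) : bool := pint p ((x - y) / p%:R).

Definition legendre (p : nat) (a : rat) : int :=
  if congr_p p a 0 then 0
  else if [exists x : 'I_p, congr_p p ((nat_of_ord x)%:R ^+ 2) a] then 1
  else -1.

From mathcomp Require Import all_boot all_algebra all_field.
From mathcomp Require Import ring zify.
Import GRing.Theory Num.Theory.
Set Implicit Arguments. Unset Strict Implicit. Unset Printing Implicit Defensive.
Local Open Scope ring_scope.

(* Write p = 2n + 1 and s = c^2 + 1.  The congruence is proved in F_p, after
   reducing the rational data modulo p.  Let r be a square root of s in a finite
   field extension L of F_p.
   - In characteristic p we have n = -1/2, hence C(2m, m) = C(n, m) (-4)^m for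
     m <= n and C(4k, 2k) = C(n, 2k) 16^k.  Together with the even part of the
     binomial expansion, (1 + z)^n + (1 - z)^n = 2 sum_k C(n, 2k) z^(2k), the two
     truncated sums become ((r + c)^n + (r - c)^n) / (2 r^n) and
     ((r + 1)^n + (r - 1)^n) / (2 r^n).
   - Core identity: ((r + c)^n + (r - c)^n) ((r + 1)^n + (r - 1)^n) = 4 * 2^n.
     Each product (r + x)(r + y) with x^2 + y^2 = r^2 is twice the square of
     g = (r + x + y)/2, and g^(2n) = g^p / g is evaluated with the Frobenius map,
     using that c and 1 are fixed by it and r^p = r s^n.
   - Hence the product of the sums is 2^n / s^n = (2s)^n in F_p, which is the
     Legendre symbol of 2s by Euler's criterion (its non-residue half comes from
     Fermat's little theorem in the extension L).
   - Finally, "x in Z_p reduces to a in F_p" is compatible with the field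
     operations, and congruence modulo p is equality of the reductions. *)

Lemma central_binomial_rec m :
  (m.+1 * 'C(m.+1.*2, m.+1) = 2 * (m.*2).+1 * 'C(m.*2, m))%N.
Proof.
have e1 := mul_bin_diag m.*2.+2 m.
have e2 := mul_bin_diag m.*2.+1 m.
have sym : 'C(m.*2.+1, m.+1) = 'C(m.*2.+1, m).
  by rewrite -bin_sub; [congr 'C(_, _); lia | lia].
rewrite /= sym in e1 e2; rewrite doubleS.
apply/eqP; rewrite -(eqn_pmul2l (ltn0Sn m)); apply/eqP.
rewrite -e1 mulnCA -e2; lia.
Qed.

Lemma sum_pairs (R : nmodType) (F : nat -> R) m :
  \sum_(0 <= i < m.*2) F i = \sum_(0 <= k < m) (F k.*2 + F k.*2.+1).
Proof.
elim: m => [|m IH]; first by rewrite !big_geq.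
by rewrite doubleS !big_nat_recr //= IH addrA.
Qed.

Lemma even_binomial_sum (R : comNzRingType) (z : R) n N : (n < N.*2)%N ->
  (1 + z) ^+ n + (1 - z) ^+ n
  = 2 * \sum_(0 <= k < N) 'C(n, k.*2)%:R * (z ^+ 2) ^+ k.
Proof.
move=> ltnN; pose F i := (z ^+ i + (- z) ^+ i) *+ 'C(n, i).
have -> : (1 + z) ^+ n + (1 - z) ^+ n = \sum_(0 <= i < N.*2) F i.
  transitivity (\sum_(0 <= i < n.+1) F i).
    rewrite !(addrC 1) !exprD1n -big_split big_mkord /=.
    by apply: eq_bigr => i _; rewrite /F mulrnDl.
  rewrite [RHS](@big_cat_nat _ _ _ n.+1) //= [X in _ + X]big1_seq ?addr0 //.
  move=> i /andP [_]; rewrite mem_index_iota => /andP [lt_ni _].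
  by rewrite /F (bin_small lt_ni) mulr0n.
rewrite sum_pairs big_distrr /=; apply: eq_bigr => k _.
have even_pow : (- z) ^+ k.*2 = z ^+ k.*2 by rewrite -mul2n !exprM sqrrN.
have odd_pow : (- z) ^+ k.*2.+1 = - z ^+ k.*2.+1.
  by rewrite exprS even_pow mulNr -exprS.
rewrite /F even_pow odd_pow addrN mul0rn addr0 -mul2n exprM.
by rewrite -mulr_natl; ring.
Qed.

Definition binom_product (F : fieldType) (N : nat) (c : F) : F :=
  (\sum_(0 <= k < N) 'C(4 * k, 2 * k)%:R * (c ^+ 2 / (16 * (c ^+ 2 + 1))) ^+ k)
  * (\sum_(0 <= k < N) 'C(4 * k, 2 * k)%:R / (16 * (c ^+ 2 + 1)) ^+ k).

Lemma binom_product_morph (F K : fieldType) (f : {rmorphism F -> K}) N (c : F) :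
  f (binom_product N c) = binom_product N (f c).
Proof.
rewrite /binom_product rmorphM !rmorph_sum; congr (_ * _); apply: eq_bigr => k _;
  by rewrite !(rmorphM, rmorphXn, fmorphV, rmorphD, rmorph_nat, rmorph1).
Qed.

Section OddCharacteristic.
Variables (L : fieldType) (p n : nat).
Hypotheses (pcharL : p \in [pchar L]) (p_def : p = (2 * n).+1).

Lemma two_neq0 : (2 : L) != 0.
Proof.
have := prime_gt1 (pcharf_prime pcharL).
by rewrite -(dvdn_pcharf pcharL) p_def => ?; apply/negP => /dvdn_leq; lia.
Qed.

(* Since 2n + 1 = 0 in L, n is -1/2 in L. *)
Lemma n_eq_neg_half : (n%:R : L) = - 2^-1.
Proof.
have : ((2 * n).+1%:R : L) = 0 by rewrite -p_def pcharf0.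
rewrite -addn1 natrD natrM => /eqP; rewrite addr_eq0 => /eqP n2.
by apply: (mulfI two_neq0); rewrite n2 mulrN divff // two_neq0.
Qed.

(* C(2m, m) = C(-1/2, m) (-4)^m, read in characteristic p. *)
Lemma central_binomial_charp m : (m <= n)%N ->
  'C(m.*2, m)%:R = 'C(n, m)%:R * (-4) ^+ m :> L.
Proof.
elim: m => [|m IH] le_mn; first by rewrite !bin0 expr0 mulr1.
have m1_neq0 : (m.+1%:R : L) != 0.
  by rewrite -(dvdn_pcharf pcharL) p_def; apply/negP => /dvdn_leq; lia.
apply: (mulfI m1_neq0); rewrite -natrM central_binomial_rec natrM IH 1?ltnW //.
rewrite [RHS]mulrA -natrM mul_bin_left !natrM natrB 1?ltnW // n_eq_neg_half.
by rewrite -[m.*2.+1]addn1 natrD -mul2n natrM exprS; field; rewrite two_neq0.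
Qed.

Lemma quarter_binomial_charp k : (k.*2 <= n)%N ->
  'C(4 * k, 2 * k)%:R = 'C(n, k.*2)%:R * 16 ^+ k :> L.
Proof.
move=> le_kn; rewrite (_ : 4 * k = (k.*2).*2)%N ?mul2n; last by lia.
rewrite central_binomial_charp // -mul2n exprM.
by congr (_ * _ ^+ _); ring.
Qed.

Lemma frobenius_half (r u : L) :
  u ^+ p = u -> ((r + u) / 2) ^+ p = (r ^+ p + u) / 2.
Proof.
move=> fix_u; rewrite -!(pFrobenius_autE pcharL) fmorph_div rmorphD rmorph_nat /=.
by rewrite !pFrobenius_autE fix_u.
Qed.

Lemma mul_eq_twice_sq (r v w : L) : r ^+ 2 = v ^+ 2 + w ^+ 2 ->
  (r + v) * (r + w) = 2 * ((r + (v + w)) / 2) ^+ 2.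
Proof.
move=> hr; have expand (a b : L) : (r + a) * (r + b) = r ^+ 2 + (a + b) * r + a * b.
  by ring.
have -> : 2 * ((r + (v + w)) / 2) ^+ 2 = (r + (v + w)) * (r + (v + w)) / 2.
  by field; rewrite two_neq0.
by rewrite !expand hr; field; rewrite two_neq0.
Qed.

(* For Frobenius-fixed x, y != 0 and r^2 = s := x^2 + y^2 the sum
   ((r + x)(r + y))^n + ((r - x)(r - y))^n equals 2^n ((x + y)^2 - s^(n+1)) / (xy):
   write both products as 2 g^2 with g = (r +- (x + y))/2, so that
   g^(2n) = g^p / g, and use r^p = r s^n. *)
Lemma pair_power_sum (x y r : L) :
  x ^+ p = x -> y ^+ p = y -> x != 0 -> y != 0 -> r ^+ 2 = x ^+ 2 + y ^+ 2 ->
  ((r + x) * (r + y)) ^+ n + ((r - x) * (r - y)) ^+ n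
  = 2 ^+ n * (((x + y) ^+ 2 - (x ^+ 2 + y ^+ 2) ^+ n.+1) / (x * y)).
Proof.
move=> fix_x fix_y x0 y0 hr; set s := x ^+ 2 + y ^+ 2 in hr *; set u := x + y.
have r_p : r ^+ p = r * s ^+ n by rewrite p_def exprS exprM hr.
have fix_u : u ^+ p = u.
  by rewrite /u -!(pFrobenius_autE pcharL) rmorphD /= !pFrobenius_autE fix_x fix_y.
have fix_Nu : (- u) ^+ p = - u.
  by rewrite -!(pFrobenius_autE pcharL) rmorphN /= !pFrobenius_autE fix_u.
have diff_sq : (r + u) * (r - u) = - (2 * (x * y)).
  have -> : (r + u) * (r - u) = r ^+ 2 - u ^+ 2 by ring.
  by rewrite hr /s /u; ring.
have [ru0 rNu0] : r + u != 0 /\ r - u != 0.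
  by apply/norP; rewrite -mulf_eq0 diff_sq oppr_eq0 !mulf_neq0 ?two_neq0.
have half_pow v : v ^+ p = v -> r + v != 0 ->
    ((r + v) / 2) ^+ (2 * n) = (r * s ^+ n + v) / (r + v).
  move=> fix_v rv0; have g0 : (r + v) / 2 != 0.
    by rewrite mulf_neq0 ?invr_eq0 ?two_neq0.
  apply: (mulIf g0); rewrite -exprSr -p_def frobenius_half // r_p.
  by field; rewrite two_neq0 rv0.
have twice_sq_pow (g : L) : (2 * g ^+ 2) ^+ n = 2 ^+ n * g ^+ (2 * n).
  by rewrite exprMn exprM.
rewrite (mul_eq_twice_sq hr) (mul_eq_twice_sq (v := - x) (w := - y)) ?sqrrN //.
rewrite -opprD -/u !twice_sq_pow !half_pow //.
rewrite (_ : _ + _ = 2 ^+ n * (2 * (r ^+ 2 * s ^+ n - u ^+ 2) / ((r + u) * (r - u)))).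
  by rewrite diff_sq hr -exprS; field; rewrite x0 y0 oppr_eq0 !mulf_neq0 ?two_neq0.
by field; rewrite ru0 rNu0.
Qed.

(* The core identity, from pair_power_sum at (x, y) = (c, 1) and (c, -1): the
   terms in (c^2 + 1)^(n+1) cancel and ((c + 1)^2 - (c - 1)^2) / c = 4. *)
Lemma core_identity (c r : L) : c ^+ p = c -> c != 0 -> r ^+ 2 = c ^+ 2 + 1 ->
  ((r + c) ^+ n + (r - c) ^+ n) * ((r + 1) ^+ n + (r - 1) ^+ n) = 4 * 2 ^+ n.
Proof.
move=> fix_c c0 hr.
have fix_N1 : (-1 : L) ^+ p = -1 by rewrite p_def exprS exprM sqrrN !expr1n mulr1.
have N1_neq0 : (-1 : L) != 0 by rewrite oppr_eq0 oner_neq0.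
have hr1 : r ^+ 2 = c ^+ 2 + 1 ^+ 2 by rewrite expr1n.
have hrN1 : r ^+ 2 = c ^+ 2 + (-1) ^+ 2 by rewrite sqrrN expr1n.
have := pair_power_sum fix_c (expr1n _ _) c0 (oner_neq0 _) hr1.
have := pair_power_sum fix_c fix_N1 c0 N1_neq0 hrN1.
rewrite opprK sqrrN !expr1n => sum_minus sum_plus.
have -> : ((r + c) ^+ n + (r - c) ^+ n) * ((r + 1) ^+ n + (r - 1) ^+ n)
    = (((r + c) * (r + 1)) ^+ n + ((r - c) * (r - 1)) ^+ n)
      + (((r + c) * (r - 1)) ^+ n + ((r - c) * (r + 1)) ^+ n).
  by rewrite !exprMn; ring.
by rewrite sum_plus sum_minus; field; rewrite N1_neq0.
Qed.

(* The theorem in L: with N = [p/4] + 1 (so that n < 2N and 2(N - 1) <= n),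
   both sums are even parts of binomial expansions at c/r and 1/r. *)
Lemma binom_product_charp (c r : L) :
  c ^+ p = c -> c != 0 -> c ^+ 2 + 1 != 0 -> r ^+ 2 = c ^+ 2 + 1 ->
  binom_product (p %/ 4).+1 c = 2 ^+ n / (c ^+ 2 + 1) ^+ n.
Proof.
move=> fix_c c0 s0 hr; set N := (p %/ 4).+1.
have r0 : r != 0 by apply: contraNneq s0 => r0; rewrite -hr r0 expr0n.
have sixteen0 : (16 : L) != 0.
  by rewrite (_ : 16 = 2 ^+ 4) ?expf_neq0 ?two_neq0 //; ring.
have four0 : (4 : L) != 0 by rewrite (_ : 4 = 2 * 2) ?mulf_neq0 ?two_neq0 //; ring.
have coef k : (k < N)%N -> 'C(4 * k, 2 * k)%:R = 'C(n, k.*2)%:R * 16 ^+ k :> L.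
  by move=> ltkN; apply: quarter_binomial_charp; move: ltkN; rewrite /N p_def; lia.
have scale v :
    (r + v) ^+ n + (r - v) ^+ n = r ^+ n * ((1 + v / r) ^+ n + (1 - v / r) ^+ n).
  by rewrite mulrDr -!exprMn mulrDr mulrBr mulr1 mulrCA mulfV // mulr1.
have nN : (n < N.*2)%N by rewrite /N p_def; lia.
have := core_identity fix_c c0 hr.
rewrite !scale !(even_binomial_sum _ nN) /binom_product => core.
have sum_c :
    \sum_(0 <= k < N) 'C(4 * k, 2 * k)%:R * (c ^+ 2 / (16 * (c ^+ 2 + 1))) ^+ k
    = \sum_(0 <= k < N) 'C(n, k.*2)%:R * ((c / r) ^+ 2) ^+ k.
  apply: eq_big_nat => k /andP [_ ltkN].
  rewrite coef // -mulrA -exprMn [in RHS]expr_div_n hr.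
  by congr (_ * _ ^+ _); field; rewrite s0 sixteen0.
have sum_1 :
    \sum_(0 <= k < N) 'C(4 * k, 2 * k)%:R / (16 * (c ^+ 2 + 1)) ^+ k
    = \sum_(0 <= k < N) 'C(n, k.*2)%:R * ((1 / r) ^+ 2) ^+ k.
  apply: eq_big_nat => k /andP [_ ltkN].
  rewrite coef // -mulrA -exprVn -exprMn [in RHS]expr_div_n hr.
  by congr (_ * _ ^+ _); field; rewrite s0 sixteen0.
have sq_pow : (c ^+ 2 + 1) ^+ n = r ^+ n * r ^+ n by rewrite -hr exprAC expr2.
rewrite sum_c sum_1 -[2 ^+ n](mulKf four0) -core sq_pow.
by field; rewrite expf_neq0 // two_neq0.
Qed.

End OddCharacteristic.

Lemma exists_sqrt_ext (F : finFieldType) (a : F) :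
  exists (L : fieldExtType F) (t : L), t ^+ 2 = a%:A.
Proof.
have nz : ('X^2 - a%:P : {poly F}) != 0 by rewrite -size_poly_eq0 size_XnsubC.
have [L [rs split_rs _]] := FinSplittingFieldFor nz.
move: split_rs; rewrite rmorphB /= map_polyXn map_polyC /=.
case: rs => [|t rs] split_rs.
  by move/eqp_size: split_rs; rewrite big_nil size_poly1 size_XnsubC.
exists L, t; apply/eqP; rewrite -subr_eq0.
have : root ('X^2 - (a%:A)%:P) t.
  by rewrite (eqp_root split_rs) root_prod_XsubC mem_head.
by rewrite /root !hornerE.
Qed.

Lemma fixed_in_base (F : finFieldType) (L : fieldExtType F) (t : L) :
  t ^+ #|F| = t -> exists b : F, t = b%:A.
Proof.
move=> fix_t; have : t \in (1%AS : {subfield L}).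
  by rewrite Fermat's_little_theorem dimv1 expn1 fix_t.
by case/vlineP => b ->; exists b.
Qed.

Section PrimeField.
Variables (p n : nat).
Hypotheses (p_prime : prime p) (p_def : p = (2 * n).+1).

Lemma Fp_pow_p (y : 'F_p) : y ^+ p = y.
Proof. by have := expf_card y; rewrite card_Fp. Qed.

Lemma Fp_pow_2n (y : 'F_p) : y != 0 -> y ^+ (2 * n) = 1.
Proof. by move=> y0; apply: (mulIf y0); rewrite mul1r -exprSr -p_def Fp_pow_p. Qed.

(* Euler's criterion, for quadratic residues ... *)
Lemma euler_square (a b : 'F_p) : a != 0 -> b ^+ 2 = a -> a ^+ n = 1.
Proof.
move=> a0 ba; rewrite -ba -exprM Fp_pow_2n //.
by apply: contraNneq a0 => b0; rewrite -ba b0 expr0n.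
Qed.

(* ... and for non-residues: if a^n = 1, a square root t of a in an extension
   satisfies t^p = t, so t lies in F_p. *)
Lemma euler_nonsquare (a : 'F_p) :
  a != 0 -> (forall b, b ^+ 2 != a) -> a ^+ n = -1.
Proof.
move=> a0 nonsq; have : (a ^+ n - 1) * (a ^+ n + 1) = 0.
  by rewrite -subr_sqr -exprM mulnC Fp_pow_2n // expr1n subrr.
move/eqP; rewrite mulf_eq0 subr_eq0 addr_eq0 => /orP [/eqP an1 | /eqP //].
have [L [t ht]] := exists_sqrt_ext a.
have t_fixed : t ^+ (2 * n).+1 = t.
  by rewrite exprS exprM ht exprZn expr1n an1 scale1r mulr1.
rewrite -p_def in t_fixed.
have /fixed_in_base [b tb] : t ^+ #|'F_p| = t by rewrite card_ord Fp_cast.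
by have := nonsq b; rewrite -(inj_eq (fmorph_inj (in_alg L))) rmorphXn /= -tb ht eqxx.
Qed.

(* The theorem in F_p: transport binom_product_charp to an extension containing
   a square root of c^2 + 1, and use (c^2 + 1)^(2n) = 1. *)
Lemma binom_product_Fp (c : 'F_p) : c != 0 -> c ^+ 2 + 1 != 0 ->
  binom_product (p %/ 4).+1 c = (2 * (c ^+ 2 + 1)) ^+ n.
Proof.
move=> c0 s0; have [L [r hr]] := exists_sqrt_ext (c ^+ 2 + 1).
have pcharL : p \in [pchar L] by rewrite pchar_lalg pchar_Fp.
have sn0 : (c ^+ 2 + 1) ^+ n != 0 by rewrite expf_neq0.
have -> : (2 * (c ^+ 2 + 1)) ^+ n = 2 ^+ n / (c ^+ 2 + 1) ^+ n.
  rewrite exprMn; congr (_ * _); apply: (mulIf sn0).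
  by rewrite mulVf // -exprD addnn -mul2n Fp_pow_2n.
apply: (fmorph_inj (in_alg L)); rewrite binom_product_morph.
have s_alg : in_alg L c ^+ 2 + 1 = in_alg L (c ^+ 2 + 1).
  by rewrite rmorphD rmorphXn rmorph1.
rewrite (binom_product_charp pcharL p_def (r := r)).
- by rewrite fmorph_div !rmorphXn rmorph_nat s_alg.
- by rewrite -rmorphXn Fp_pow_p.
- by rewrite fmorph_eq0.
- by rewrite s_alg fmorph_eq0.
- by rewrite s_alg.
Qed.

End PrimeField.

(* Reduction modulo p of a rational number, meaningful on Z_p. *)
Definition red (p : nat) (x : rat) : 'F_p := (numq x)%:~R / (denq x)%:~R.

Definition reduces_to (p : nat) (x : rat) (a : 'F_p) : Prop :=
  pint p x /\ red p x = a.
Arguments reduces_to : clear implicits.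

Lemma den_rat_neq0 (x : rat) : ((denq x)%:~R : rat) != 0.
Proof. by rewrite intr_eq0 denq_neq0. Qed.

Section Reduction.
Variables (p : nat) (p_prime : prime p).

Lemma Fp_int_eq0 (z : int) : ((z%:~R : 'F_p) == 0) = (p %| `|z|)%N.
Proof. by rewrite -(dvdz_pcharf (pchar_Fp p_prime)). Qed.

Lemma den_Fp_neq0 x : pint p x -> ((denq x)%:~R : 'F_p) != 0.
Proof. by rewrite Fp_int_eq0. Qed.

Lemma pint_mul_den x y :
  pint p x -> pint p y -> ~~ (p %| `|(denq x * denq y)%R|)%N.
Proof. by move=> px py; rewrite abszM Euclid_dvdM // negb_or; apply/andP. Qed.

(* A fraction a/b with p not dividing b reduces to a/b, whatever the
   (not necessarily reduced) representation. *)
Lemma reduces_frac (a b : int) : ~~ (p %| `|b|)%N ->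
  reduces_to p (a%:~R / b%:~R) (a%:~R / b%:~R).
Proof.
case: divqP => [_ | k x k0]; first by rewrite dvdn0.
rewrite abszM Euclid_dvdM // negb_or => /andP [pk pdx]; split=> //.
have k0' : (k%:~R : 'F_p) != 0 by rewrite Fp_int_eq0.
by rewrite /red !intrM; field; rewrite k0' den_Fp_neq0.
Qed.

Lemma reduces_fracE x (a b : int) : ~~ (p %| `|b|)%N -> x = a%:~R / b%:~R ->
  reduces_to p x (a%:~R / b%:~R).
Proof. by move=> pb ->; apply: reduces_frac. Qed.

Lemma reduces_int (z : int) : reduces_to p z%:~R z%:~R.
Proof.
have := @reduces_frac z 1; rewrite !divr1; apply.
by rewrite dvdn1 gtn_eqF ?prime_gt1.
Qed.

Lemma reduces_nat m : reduces_to p m%:R m%:R.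
Proof. by have := reduces_int m; rewrite !pmulrn. Qed.

Lemma reduces0 : reduces_to p 0 0.
Proof. by have := reduces_nat 0; rewrite !mulr0n. Qed.

Lemma reduces1 : reduces_to p 1 1.
Proof. by have := reduces_nat 1; rewrite !mulr1n. Qed.

Lemma reducesD x y a b :
  reduces_to p x a -> reduces_to p y b -> reduces_to p (x + y) (a + b).
Proof.
move=> [px <-] [py <-]; rewrite /red.
have -> : (numq x)%:~R / (denq x)%:~R + (numq y)%:~R / (denq y)%:~R
    = (numq x * denq y + numq y * denq x)%:~R / (denq x * denq y)%:~R :> 'F_p.
  by rewrite intrD !intrM; field; rewrite !den_Fp_neq0.
apply: reduces_fracE; first exact: pint_mul_den.
rewrite -{1}(divq_num_den x) -{1}(divq_num_den y) intrD !intrM.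
by field; rewrite !den_rat_neq0.
Qed.

Lemma reducesM x y a b :
  reduces_to p x a -> reduces_to p y b -> reduces_to p (x * y) (a * b).
Proof.
move=> [px <-] [py <-]; rewrite /red.
have -> : (numq x)%:~R / (denq x)%:~R * ((numq y)%:~R / (denq y)%:~R)
    = (numq x * numq y)%:~R / (denq x * denq y)%:~R :> 'F_p.
  by rewrite !intrM; field; rewrite !den_Fp_neq0.
apply: reduces_fracE; first exact: pint_mul_den.
rewrite -{1}(divq_num_den x) -{1}(divq_num_den y) !intrM.
by field; rewrite !den_rat_neq0.
Qed.

Lemma reducesN x a : reduces_to p x a -> reduces_to p (- x) (- a).
Proof.
move=> [px <-]; rewrite /red -mulNr -intrN.
by apply: reduces_fracE => //; rewrite intrN mulNr divq_num_den.
Qed.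

Lemma reducesV x a : reduces_to p x a -> a != 0 -> reduces_to p x^-1 a^-1.
Proof.
move=> [px <-]; rewrite /red mulf_eq0 invr_eq0 negb_or => /andP [num0 _].
rewrite invf_div; apply: reduces_fracE; first by rewrite -Fp_int_eq0.
by rewrite -invf_div divq_num_den.
Qed.

Lemma reducesX x a k : reduces_to p x a -> reduces_to p (x ^+ k) (a ^+ k).
Proof.
move=> hx; elim: k => [|k IH]; first by rewrite !expr0; exact: reduces1.
by rewrite !exprS; apply: reducesM.
Qed.

Lemma reduces_sum N (F : nat -> rat) (G : nat -> 'F_p) :
  (forall k, reduces_to p (F k) (G k)) ->
  reduces_to p (\sum_(0 <= k < N) F k) (\sum_(0 <= k < N) G k).
Proof.
move=> hFG; elim: N => [|N IH]; first by rewrite !big_geq //; exact: reduces0.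
by rewrite !big_nat_recr //; apply: reducesD.
Qed.

(* Congruence modulo p in Z_p is equality of the reductions: z/p lies in Z_p
   exactly when p divides the numerator of z. *)
Lemma congr_reduces x y a b :
  reduces_to p x a -> reduces_to p y b -> congr_p p x y = (a == b).
Proof.
move=> hx hy; rewrite -subr_eq0 /congr_p.
have [pz <-] := reducesD hx (reducesN hy); move: pz; set z := x - y => pz.
have p0 : (p%:R : rat) != 0 by rewrite pnatr_eq0 gtn_eqF ?prime_gt0.
apply/idP/eqP => [pzp | /eqP].
  have [_] := reducesM (conj pzp erefl) (reduces_nat p).
  by rewrite divfK // pchar_Fp_0 // mulr0.
rewrite /red mulf_eq0 invr_eq0 (negbTE (den_Fp_neq0 pz)) orbF.
rewrite -(dvdz_pcharf (pchar_Fp p_prime)) => /dvdzP [m num_z].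
have -> : z / p%:R = m%:~R / (denq z)%:~R.
  rewrite -{1}(divq_num_den z) num_z intrM pmulrn.
  by field; rewrite den_rat_neq0 p0.
exact: (reduces_frac m pz).1.
Qed.

Lemma reduces_binom_product N c (g : 'F_p) : reduces_to p c g ->
  (2 : 'F_p) != 0 -> g ^+ 2 + 1 != 0 ->
  reduces_to p (binom_product N c) (binom_product N g).
Proof.
move=> hc two0 s0.
have h16 : reduces_to p (16 * (c ^+ 2 + 1)) (16 * (g ^+ 2 + 1)).
  apply: reducesM; first exact: reduces_nat.
  by apply: reducesD; [exact: reducesX | exact: reduces1].
have d0 : 16 * (g ^+ 2 + 1) != 0.
  by rewrite mulf_neq0 // (_ : 16 = 2 ^+ 4) ?expf_neq0 //; ring.
apply: reducesM; apply: reduces_sum => k; apply: reducesM; try exact: reduces_nat.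
  by apply: reducesX; apply: reducesM; [exact: reducesX | exact: reducesV].
by rewrite -!exprVn; apply: reducesX; apply: reducesV.
Qed.

Variable n : nat.
Hypothesis p_def : p = (2 * n).+1.

Lemma legendre_reduces a g : reduces_to p a g -> g != 0 ->
  reduces_to p (legendre p a)%:~R (g ^+ n).
Proof.
move=> ha g0; rewrite /legendre (congr_reduces ha reduces0) (negbTE g0).
have -> : [exists x : 'I_p, congr_p p (x%:R ^+ 2) a] = [exists b : 'F_p, b ^+ 2 == g].
  apply/existsP/existsP => [[x hx] | [b hb]].
    by exists x%:R; rewrite -(congr_reduces (reducesX 2 (reduces_nat x)) ha).
  have lt_bp : (b < p)%N by rewrite -[X in (_ < X)%N](Fp_cast p_prime) ltn_ord.
  exists (Ordinal lt_bp).
  by rewrite (congr_reduces (reducesX 2 (reduces_nat _)) ha) /= natr_Zp.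
case: existsP => [[b /eqP hb] | nonsq].
  by rewrite (euler_square p_prime p_def g0 hb); exact: reduces_int 1.
rewrite (euler_nonsquare p_prime p_def g0); first exact: reduces_int (-1).
by move=> b; apply/negP => hb; apply: nonsq; exists b.
Qed.

End Reduction.

Theorem corollary2p1 (p : nat) (c : rat) :
  prime p -> odd p -> pint p c -> ~~ congr_p p (c * (c ^+ 2 + 1)) 0 ->
  congr_p p
    ((\sum_(0 <= k < (p %/ 4).+1) ('C(4 * k, 2 * k))%:R
        * (c ^+ 2 / (16 * (c ^+ 2 + 1))) ^+ k)
     * (\sum_(0 <= k < (p %/ 4).+1) ('C(4 * k, 2 * k))%:R
        / (16 * (c ^+ 2 + 1)) ^+ k))
    ((legendre p (2 * (c ^+ 2 + 1)))%:~R).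
Proof.
move=> p_prime p_odd pint_c nondeg.
have p_def : p = (2 * p./2).+1 by rewrite -{1}(odd_double_half p) p_odd mul2n.
have hc : reduces_to p c (red p c) by [].
set g := red p c in hc; set n := p./2 in p_def.
have hs := reducesD p_prime (reducesX p_prime 2 hc) (reduces1 p_prime).
have [g0 s0] : g != 0 /\ g ^+ 2 + 1 != 0.
  apply/norP; rewrite -mulf_eq0.
  by rewrite -(congr_reduces p_prime (reducesM p_prime hc hs) (reduces0 p_prime)).
have two0 : (2 : 'F_p) != 0 := two_neq0 (pchar_Fp p_prime) p_def.
have lhs := reduces_binom_product p_prime (p %/ 4).+1 hc two0 s0.
have rhs := legendre_reduces p_prime p_def
  (reducesM p_prime (reduces_nat p_prime 2) hs) (mulf_neq0 two0 s0).
rewrite -/(binom_product (p %/ 4).+1 c) (congr_reduces p_prime lhs rhs).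
by rewrite (binom_product_Fp p_prime p_def).
Qed.
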